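(* For every Hessenberg space $H$ of $n\times n$ matrices, the variety $X_H=\{[g]\in GL_n(\mathbb{C})/B : g^{-1}E_{1n}g\in H\}$ is a union of Schubert varieties $Y_w$.
   Context: $B$ is the group of invertible upper-triangular $n\times n$ complex matrices; $[g]\in GL_n(\mathbb{C})/B$ denotes the flag whose $k$-dimensional subspace is spanned by the first $k$ columns of $g$. $E_{kl}$ denotes the matrix unit with $1$ in entry $(k,l)$ and $0$ elsewhere. A permutation $w$ of $\{1,\dots,n\}$ is identified with the permutation matrix satisfying $we_k=e_{w(k)}$ for the standard basis $e_1,\dots,e_n$. The Schubert variety $Y_w$ is the closure of $\{[bw]: b\in B\}$. A Hessenberg space is a subspace of the form $H_h=\operatorname{span}\{E_{kl}: k\le h(l)\}$ for a nondecreasing function $h:\{1,\dots,n\}\to\{0,1,\dots,n\}$. *)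

From HB Require Import structures.
From mathcomp Require Import all_boot all_algebra all_fingroup.
From mathcomp Require Import reals complex.
From mathcomp Require Import mpoly.

Set Implicit Arguments.
Unset Strict Implicit.
Unset Printing Implicit Defensive.
Import GRing.Theory Num.Theory.
Local Open Scope ring_scope.

(* Matrices are (m.+1) x (m.+1) = n x n with n = m.+1 >= 1; indices are
   0-based, so paper index k corresponds to ordinal k-1. *)

Section Defs.
Variables (R : realType) (m : nat).
Local Notation C := (R[i]).
Local Notation n := m.+1.
Local Notation M := 'M[C]_n.

Definition upper_unit (b : M) : Prop :=
  b \in unitmx /\ forall i j : 'I_n, (j < i)%N -> b i j = 0.

(* permutation matrix of w, with w e_k = e_{w k}: entry (i,j) = [i == w j] *)
Definition permmat (w : 'S_n) : M := \matrix_(i, j) (i == w j)%:R.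

(* Sets of flags in GL_n/B are identified with their preimages in GL_n,
   i.e. with right-B-saturated sets of invertible matrices. *)
Definition Bsat (Z : M -> Prop) : Prop :=
  forall g b, Z g -> upper_unit b -> Z (g *m b).

Definition zariski_closed (Z : M -> Prop) : Prop :=
  exists P : {mpoly C[n * n]} -> Prop,
    forall g : M, Z g <-> (g \in unitmx /\
        forall p, P p -> p.@[fun k => mxvec g 0 k] = 0).

(* Closed subsets of GL_n/B (quotient Zariski topology) = sets whose preimage
   is Zariski closed. Preimage in GL_n of the Schubert variety
   Y_w = closure of {[b w] : b in B}: intersection of all closed sets of
   flags containing every [b w]. *)
Definition schubert (w : 'S_n) (g : M) : Prop :=
  g \in unitmx /\
  forall Z : M -> Prop, Bsat Z -> zariski_closed Z ->
    (forall b, upper_unit b -> Z (b *m permmat w)) -> Z g.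

(* Hessenberg function h (values in {0..n}, nondecreasing), paper
   indexing: h(l) for l = j+1 is h j. *)
Definition hessenberg_fun (h : 'I_n -> nat) : Prop :=
  (forall j, (h j <= n)%N) /\ (forall j1 j2 : 'I_n, (j1 <= j2)%N -> (h j1 <= h j2)%N).

(* X in H_h = span{E_kl : k <= h(l)} iff X is supported on those entries:
   with 0-based i = k-1, j = l-1 the condition k <= h(l) reads i < h j. *)
Definition in_hess (h : 'I_n -> nat) (X : M) : Prop :=
  forall i j : 'I_n, (h j <= i)%N -> X i j = 0.

Definition E1n : M := delta_mx 0 ord_max.

Definition XH (h : 'I_n -> nat) (g : M) : Prop :=
  g \in unitmx /\ in_hess h (invmx g *m E1n *m g).
End Defs.

From HB Require Import structures.
From mathcomp Require Import all_boot all_algebra all_fingroup.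
From mathcomp Require Import reals complex mpoly.
Set Implicit Arguments.
Unset Strict Implicit.
Unset Printing Implicit Defensive.
Import GRing.Theory Num.Theory.
Local Open Scope ring_scope.

(* Let X be the preimage of X_H in GL_n.  For nondecreasing h the space H_h is
   stable under left and right multiplication by upper triangular matrices, so
   X is stable under right multiplication by B; since b^-1 E_{1n} b is a
   multiple of E_{1n} for b in B, X is also stable under left multiplication
   by B.  Moreover X is Zariski closed, being cut out in GL_n by the entries of
   adj(g) E_{1n} g.  By the Bruhat decomposition GL_n = \bigsqcup_w B w B, X is
   therefore the union of the cells B w B with w in X, and, being closed and
   B-saturated, it contains the closures Y_w of these cells.  The Bruhat
   decomposition comes from column reduction: multiplying g on the right by
   upper unitriangular matrices makes the lowest nonzero entries of its
   columns lie in distinct rows, and then g c = b w with b upper triangular. *)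

Lemma mulmx_deltaE (F : pzRingType) m n p (A : 'M[F]_(m, n)) (k : 'I_n) (l : 'I_p) i j :
  (A *m delta_mx k l) i j = A i k *+ (j == l).
Proof.
rewrite mxE (bigD1 k) //= big1 => [|k' /negbTE nk']; last by rewrite mxE nk' mulr0.
by rewrite mxE eqxx addr0 mulr_natr.
Qed.

Section UpperTriangular.
Variables (F : fieldType) (n : nat).
Implicit Types A B : 'M[F]_n.

Definition upper_mx A := forall i j : 'I_n, (j < i)%N -> A i j = 0.

Lemma upper_mx1 : upper_mx 1%:M.
Proof. by move=> i j /ltn_eqF ji; rewrite mxE eq_sym -val_eqE /= ji. Qed.

Lemma upper_mxM A B : upper_mx A -> upper_mx B -> upper_mx (A *m B).
Proof.
move=> uA uB i j lt_ji; rewrite mxE big1 // => k _.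
have [lt_ki|le_ik] := ltnP k i; first by rewrite uA // mul0r.
by rewrite uB ?mulr0 // (leq_trans lt_ji).
Qed.

Lemma upper_mx_unitE A : upper_mx A -> (A \in unitmx) = [forall i, A i i != 0].
Proof.
move=> uA; rewrite unitmxE -det_tr det_trig; last first.
  by apply/is_trig_mxP => i j lt_ij; rewrite mxE uA.
under eq_bigr do rewrite mxE.
by rewrite unitfE; apply/prodf_neq0/forallP => [nzA i | nzA i _]; apply: nzA.
Qed.

(* Column j of invmx A *m A = 1 only involves the columns k <= j of invmx A. *)
Lemma upper_mx_inv A : upper_mx A -> upper_mx (invmx A).
Proof.
move=> uA; have [unitA|/invmx_out-> //] := boolP (A \in unitmx).
have nzA : forall i, A i i != 0 by apply/forallP; rewrite -upper_mx_unitE.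
suff IH (j0 : nat) (j : 'I_n) : j0 = j -> forall i : 'I_n, (j < i)%N -> invmx A i j = 0.
  by move=> i j; apply: IH.
elim/ltn_ind: j0 j => j0 IH j Ej0 i lt_ji; subst j0.
have := congr1 (fun B => B i j) (mulVmx unitA).
rewrite mxE (bigD1 j) //= big1 => [|k nkj]; last first.
  have [lt_kj|lt_jk|/val_inj ekj] := ltngtP k j; last by rewrite ekj eqxx in nkj.
  - by rewrite (IH k) ?mul0r // (ltn_trans lt_kj).
  - by rewrite uA ?mulr0.
rewrite addr0 !mxE eq_sym -val_eqE /= (ltn_eqF lt_ji) => /eqP.
by rewrite mulf_eq0 (negbTE (nzA j)) orbF => /eqP.
Qed.

Definition upper_unitmx A := A \in unitmx /\ upper_mx A.

Lemma upper_unitmx1 : upper_unitmx 1%:M.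
Proof. by split; [apply: unitmx1 | apply: upper_mx1]. Qed.

Lemma upper_unitmxM A B : upper_unitmx A -> upper_unitmx B -> upper_unitmx (A *m B).
Proof. by case=> uA tA [uB tB]; split; [rewrite unitmx_mul uA | apply: upper_mxM]. Qed.

Lemma upper_unitmx_inv A : upper_unitmx A -> upper_unitmx (invmx A).
Proof. by case=> uA tA; split; [rewrite unitmx_inv | apply: upper_mx_inv]. Qed.

Lemma invmxM A B : A \in unitmx -> B \in unitmx ->
  invmx (A *m B) = invmx B *m invmx A.
Proof.
move=> uA uB; have uAB : A *m B \in unitmx by rewrite unitmx_mul uA.
rewrite -[RHS](mulmxK uAB) !mulmxA -(mulmxA _ (invmx A)) mulVmx //.
by rewrite mulmx1 mulVmx // mul1mx.
Qed.

End UpperTriangular.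

Section ColumnEchelon.
Variables (F : fieldType) (n : nat).
Implicit Types (A G : 'M[F]_n) (l : 'I_n -> 'I_n).

Definition col_pivot A (j r : 'I_n) :=
  A r j != 0 /\ forall i : 'I_n, (r < i)%N -> A i j = 0.

Definition col_echelon A (k : nat) l :=
  (forall j : 'I_n, (j < k)%N -> col_pivot A j (l j)) /\
  {in [pred j : 'I_n | (j < k)%N] &, injective l}.

Definition addcol (j k : 'I_n) (a : F) : 'M[F]_n := 1%:M + a *: delta_mx j k.

Lemma mulmx_addcolE A (j k : 'I_n) a (i c : 'I_n) :
  (A *m addcol j k a) i c = A i c + a * A i j *+ (c == k).
Proof. by rewrite mulmxDr mulmx1 -scalemxAr mxE [X in _ + X]mxE mulmx_deltaE mulrnAr. Qed.

Lemma upper_mx_addcol (j k : 'I_n) a : (j < k)%N -> upper_mx (addcol j k a).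
Proof.
move=> lt_jk i c lt_ci; rewrite !mxE eq_sym -val_eqE /= (ltn_eqF lt_ci) add0r.
have [ei|] := eqVneq i j; last by rewrite mulr0.
by rewrite -(val_eqE c) /= ltn_eqF ?mulr0 // (ltn_trans lt_ci) // ei.
Qed.

Lemma upper_unitmx_addcol (j k : 'I_n) a : (j < k)%N -> upper_unitmx (addcol j k a).
Proof.
move=> lt_jk; have t_jk := upper_mx_addcol a lt_jk; split=> //.
rewrite upper_mx_unitE //; apply/forallP => i; rewrite !mxE eqxx.
have [-> | ] := eqVneq i j; last by rewrite andFb mulr0 addr0 oner_eq0.
by rewrite -val_eqE /= ltn_eqF // mulr0 addr0 oner_eq0.
Qed.

Lemma col_echelon_addcol A k l (j kk : 'I_n) a :
  (k <= kk)%N -> col_echelon A k l -> col_echelon (A *m addcol j kk a) k l.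
Proof.
move=> le_k_kk [piv inj]; split=> // j' lt_j'k.
have nkk : (j' == kk) = false by rewrite -val_eqE /= ltn_eqF // (leq_trans lt_j'k).
by have [nz low] := piv j' lt_j'k; split=> [|i /low]; rewrite mulmx_addcolE nkk addr0.
Qed.

Lemma col_echelon_extend A (k r : 'I_n) l :
  col_echelon A k l -> col_pivot A k r -> (forall j : 'I_n, (j < k)%N -> l j != r) ->
  col_echelon A k.+1 (fun j => if j == k then r else l j).
Proof.
move=> [piv inj] pivk fresh; have lt_of j : (j < k.+1)%N -> j != k -> (j < k)%N.
  by move=> lt_jk njk; rewrite ltn_neqAle -ltnS lt_jk andbT.
split=> [j lt_jk | j1 j2]; first by case: eqVneq => [->|/(lt_of _ lt_jk)/piv].
rewrite !inE => lt1 lt2; case: eqVneq => [->|n1]; case: eqVneq => [->|n2] //.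
- by move=> e; move: (fresh _ (lt_of _ lt2 n2)); rewrite e eqxx.
- by move=> e; move: (fresh _ (lt_of _ lt1 n1)); rewrite e eqxx.
- by apply: inj; rewrite inE lt_of.
Qed.

Lemma unitmx_col_neq0 G (k : 'I_n) : G \in unitmx -> exists i, G i k != 0.
Proof.
move=> uG; apply/existsP; apply: contraLR uG => /existsPn col0; apply/negP => uG.
have colG0 : G *m delta_mx k (0 : 'I_1) = 0.
  by apply/matrixP => i j; rewrite mulmx_deltaE mxE (eqP (negbNE (col0 i))) mul0rn.
have /matrixP/(_ k 0) := congr1 (mulmx (invmx G)) colG0.
by rewrite mulKmx // mulmx0 !mxE !eqxx => /eqP; rewrite oner_eq0.
Qed.

(* Reduce column k, scanning its entries from the bottom: an entry sitting in
   the pivot row of an earlier column is cleared with that column, which does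
   not touch the rows below it. *)
Lemma col_echelon_step G (k : 'I_n) l N :
  G \in unitmx -> col_echelon G k l -> (forall i : 'I_n, (N <= i)%N -> G i k = 0) ->
  exists2 c, upper_unitmx c & exists l', col_echelon (G *m c) k.+1 l'.
Proof.
elim: N G => [|N IH] G uG ech low.
  by have [i0] := unitmx_col_neq0 k uG; rewrite low ?eqxx.
have [ltNn|] := ltnP N n; last first.
  by move=> leqnN; apply: IH => // i /(leq_trans leqnN); rewrite leqNgt ltn_ord.
pose r := Ordinal ltNn; have lowr (i : 'I_n) : (r < i)%N -> G i k = 0 by apply: low.
have [Grk0|nzGrk] := eqVneq (G r k) 0.
  apply: IH => // i; rewrite leq_eqVlt => /orP[/eqP Ni|/lowr //].
  by rewrite (_ : i = r) //; exact: val_inj.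
have [j0 /andP[lt_j0k /eqP lj0]|fresh] := pickP [pred j : 'I_n | (j < k)%N && (l j == r)].
  have [nzGrj0 lowj0] := ech.1 j0 lt_j0k; rewrite lj0 in nzGrj0 lowj0.
  pose c1 := addcol j0 k (- (G r k / G r j0)).
  have Bc1 : upper_unitmx c1 by apply: upper_unitmx_addcol.
  have uGc1 : G *m c1 \in unitmx by rewrite unitmx_mul uG Bc1.1.
  have echc1 : col_echelon (G *m c1) k l := col_echelon_addcol _ _ (leqnn k) ech.
  have lowc1 (i : 'I_n) : (N <= i)%N -> (G *m c1) i k = 0.
    rewrite mulmx_addcolE eqxx mulr1n leq_eqVlt => /orP[/eqP Ni|lt_ri].
      by rewrite (_ : i = r) ?mulNr ?divfK ?subrr //; exact: val_inj.
    by rewrite lowr // (lowj0 i) // mulr0 addr0.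
  have [c Bc [l' ech']] := IH _ uGc1 echc1 lowc1.
  by exists (c1 *m c); [apply: upper_unitmxM | exists l'; rewrite mulmxA].
exists 1%:M; first exact: upper_unitmx1.
exists (fun j => if j == k then r else l j); rewrite mulmx1.
apply: col_echelon_extend => // j lt_jk; apply/eqP => ljr.
by move: (fresh j); rewrite /= lt_jk ljr eqxx.
Qed.

Lemma col_echelon_exists G : G \in unitmx ->
  exists2 c, upper_unitmx c & exists l, col_echelon (G *m c) n l.
Proof.
move=> uG; suff ech_upto k : (k <= n)%N ->
    exists2 c, upper_unitmx c & exists l, col_echelon (G *m c) k l.
  exact: ech_upto.
elim: k => [|k IH] le_kn.
  exists 1%:M; first exact: upper_unitmx1.
  by exists id; split=> // j; rewrite ltn0.
have [c Bc [l ech]] := IH (ltnW le_kn).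
have uGc : G *m c \in unitmx by rewrite unitmx_mul uG Bc.1.
have below_n (i : 'I_n) : (n <= i)%N -> (G *m c) i (Ordinal le_kn) = 0.
  by rewrite leqNgt ltn_ord.
have [c' Bc' [l' ech']] := col_echelon_step (k := Ordinal le_kn) uGc ech below_n.
by exists (c *m c'); [apply: upper_unitmxM | exists l'; rewrite mulmxA].
Qed.

End ColumnEchelon.

Lemma bruhat_decomposition (F : fieldType) n (G : 'M[F]_n) : G \in unitmx ->
  exists (s : 'S_n) (b1 b2 : 'M_n),
    [/\ upper_unitmx b1, upper_unitmx b2 & G = b1 *m perm_mx s *m b2].
Proof.
move=> uG; have [c Bc [l [piv inj]]] := col_echelon_exists uG.
have linj : injective l by move=> j1 j2; apply: inj; rewrite inE ltn_ord.
pose s := perm linj; pose b1 := G *m c *m perm_mx s.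
have b1E i j : b1 i j = (G *m c) i (s^-1 j)%g by rewrite /b1 -{1}[s]invgK -col_permE mxE.
have ls j : l (s^-1 j)%g = j by rewrite -[l _]permE permKV.
have pivs j : col_pivot (G *m c) (s^-1 j)%g j by rewrite -{2}(ls j); apply: piv.
have up_b1 : upper_mx b1 by move=> i j lt_ji; rewrite b1E; apply: (pivs j).2.
exists s^-1%g, b1, (invmx c); split.
- split=> //; rewrite upper_mx_unitE //.
  by apply/forallP => j; rewrite b1E; apply: (pivs j).1.
- exact: upper_unitmx_inv.
- by rewrite /b1 -(mulmxA _ (perm_mx s)) -perm_mxM mulgV perm_mx1 mulmx1 mulmxK ?Bc.1.
Qed.

Lemma upper_mx_corner (F : fieldType) n (b1 b2 : 'M[F]_n.+1) :
  upper_mx b1 -> upper_mx b2 ->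
  b1 *m delta_mx 0 ord_max *m b2 = (b1 0 0 * b2 ord_max ord_max) *: delta_mx 0 ord_max.
Proof.
move=> t1 t2; apply/matrixP => i j; rewrite mxE (bigD1 ord_max) //= big1 => [|k /negbTE nk].
  rewrite mulmx_deltaE eqxx mulr1n addr0 !mxE.
  have [->|ni] := eqVneq i 0; last by rewrite (t1 i) ?lt0n // mul0r andFb mulr0.
  have [->|nj] := eqVneq j ord_max; first by rewrite !mulr1.
  by rewrite (t2 ord_max j) ?mulr0 // ltn_neqAle -ltnS ltn_ord andbT.
by rewrite mulmx_deltaE nk mulr0n mul0r.
Qed.

Lemma permmat_perm (R : realType) m (w : 'S_m.+1) : permmat R w = perm_mx w^-1.
Proof. by apply/matrixP => i j; rewrite !mxE (canF_eq (permKV w)). Qed.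

Lemma schubert_double_coset (R : realType) m (w : 'S_m.+1) (b1 b2 : 'M[R[i]]_m.+1) :
  upper_unit b1 -> upper_unit b2 -> schubert w (b1 *m permmat R w *m b2).
Proof.
move=> [ub1 tb1] B2; split.
  by rewrite !unitmx_mul ub1 B2.1 permmat_perm unitmx_perm.
by move=> Z satZ _ Zbw; apply: satZ B2; apply: Zbw.
Qed.

Section HessenbergVariety.
Variables (R : realType) (m : nat).
Local Notation n := m.+1.
Local Notation M := 'M[R[i]]_n.
Variable h : 'I_n -> nat.
Hypothesis h_mono : {homo h : j1 j2 / (j1 <= j2)%N}.
Implicit Types (X b g : M) (a : R[i]).

Definition in_hessb (X : M) := [forall i : 'I_n, forall j : 'I_n, (h j <= i)%N ==> (X i j == 0)].

Lemma in_hessP X : reflect (in_hess h X) (in_hessb X).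
Proof.
apply: (iffP forallP) => [Xh i j le_hi | Xh i].
  by apply/eqP; move/forallP/(_ j)/implyP: (Xh i); apply.
by apply/forallP => j; apply/implyP => /Xh ->.
Qed.

Lemma in_hessZ a X : in_hess h X -> in_hess h (a *: X).
Proof. by move=> Xh i j /Xh Xij; rewrite mxE Xij mulr0. Qed.

Lemma in_hess_mull (b X : M) : upper_mx b -> in_hess h X -> in_hess h (b *m X).
Proof.
move=> tb Xh i j le_hi; rewrite mxE big1 // => k _.
have [lt_ki|le_ik] := ltnP k i; first by rewrite tb // mul0r.
by rewrite Xh ?mulr0 // (leq_trans le_hi).
Qed.

Lemma in_hess_mulr (X b : M) : upper_mx b -> in_hess h X -> in_hess h (X *m b).
Proof.
move=> tb Xh i j le_hi; rewrite mxE big1 // => k _.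
have [lt_jk|le_kj] := ltnP j k; first by rewrite tb // mulr0.
by rewrite Xh ?mul0r // (leq_trans (h_mono le_kj)).
Qed.

Lemma Bsat_XH : Bsat (@XH R m h).
Proof.
move=> g b [ug Xg] [ub tb]; split; first by rewrite unitmx_mul ug.
have -> : invmx (g *m b) *m E1n R m *m (g *m b) =
    invmx b *m (invmx g *m E1n R m *m g) *m b by rewrite invmxM // !mulmxA.
exact/in_hess_mulr/in_hess_mull/Xg/upper_mx_inv.
Qed.

(* E_{1n} spans a line stable under conjugation by B. *)
Lemma XH_mull (b g : M) : upper_unit b -> XH h g -> XH h (b *m g).
Proof.
move=> [ub tb] [ug Xg]; split; first by rewrite unitmx_mul ub.
have -> : invmx (b *m g) *m E1n R m *m (b *m g) =
    invmx g *m (invmx b *m E1n R m *m b) *m g by rewrite invmxM // !mulmxA.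
rewrite /E1n (upper_mx_corner (upper_mx_inv tb) tb) -scalemxAr -scalemxAl.
exact: in_hessZ.
Qed.

Lemma zariski_closed_XH : zariski_closed (@XH R m h).
Proof.
pose X : 'M[{mpoly R[i][n * n]}]_n := \matrix_(i, j) 'X_(mxvec_index i j).
pose P p := exists i j : 'I_n, (h j <= i)%N /\ p = (\adj X *m delta_mx 0 ord_max *m X) i j.
exists P => g; pose v k := mxvec g 0 k.
have evalP i j : ((\adj X *m delta_mx 0 ord_max *m X) i j).@[v] = (\adj g *m E1n R m *m g) i j.
  have evalX : map_mx (meval v) X = g.
    by apply/matrixP => i' j'; rewrite !mxE mevalXU /v mxvecE.
  transitivity (map_mx (meval v) (\adj X *m delta_mx 0 ord_max *m X) i j).
    by rewrite [RHS]mxE.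
  by rewrite !map_mxM map_mx_adj map_delta_mx evalX.
split=> [[ug Xg] | [ug Pg]]; split=> //;
  have invE : invmx g *m E1n R m *m g = (\det g)^-1 *: (\adj g *m E1n R m *m g)
    by rewrite /invmx ug -!scalemxAl.
- move=> p [i [j [le_hi ->]]]; rewrite evalP.
  have det_neq0 : \det g != 0 by rewrite -unitfE -unitmxE.
  by have := in_hessZ (\det g) Xg; rewrite invE scalerA mulfV // scale1r; apply.
- rewrite invE; apply: in_hessZ => i j le_hi.
  by rewrite -evalP; apply: Pg; exists i, j.
Qed.

Lemma XH_schubert (w : 'S_n) g : XH h (permmat R w) -> schubert w g -> XH h g.
Proof.
move=> Xw [_ Yg]; apply: Yg; first exact: Bsat_XH.
  exact: zariski_closed_XH.
by move=> b Bb; apply: XH_mull.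
Qed.

End HessenbergVariety.

Theorem mainTheorem2 (R : realType) (m : nat) (h : 'I_m.+1 -> nat) :
  hessenberg_fun h ->
  exists W : {set 'S_m.+1},
    forall g : 'M[R[i]]_m.+1,
      XH h g <-> exists2 w, w \in W & schubert w g.
Proof.
move=> [_ h_mono].
exists [set w | in_hessb h (invmx (permmat R w) *m E1n R m *m permmat R w)] => g.
split=> [Xg | [w]]; last first.
  rewrite inE => /in_hessP Xw; apply: (XH_schubert h_mono) => //.
  by split; rewrite // permmat_perm unitmx_perm.
have [s [b1 [b2 [B1 B2 Eg]]]] := bruhat_decomposition (proj1 Xg).
have Es : perm_mx s = permmat R s^-1 by rewrite permmat_perm invgK.
exists s^-1%g; last by rewrite Eg Es; apply: schubert_double_coset.
have := Bsat_XH h_mono (XH_mull (upper_unitmx_inv B1) Xg) (upper_unitmx_inv B2).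
rewrite Eg !mulmxA mulVmx ?mul1mx ?mulmxK ?B1.1 ?B2.1 // => -[_].
by rewrite inE -Es => /in_hessP.
Qed.
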